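(* Let $\Gamma$ be a group and $\phi:\Gamma\to\mathbb R$ a homogeneous quasimorphism which is not a homomorphism. Let $\mu=\exp(2\pi i\phi):\Gamma\to S^1=U(1)$. Then $\frac{3}{\pi}\arcsin\frac{D(\mu)}{2}+\|d\phi\|_\infty\ge1$.
   Context: A quasimorphism is a function $\phi:\Gamma\to\mathbb R$ with $d\phi(\gamma,\eta)=\phi(\gamma\eta)-\phi(\gamma)-\phi(\eta)$ bounded on $\Gamma\times\Gamma$; $\|d\phi\|_\infty=\sup|d\phi|$. It is homogeneous if $\phi(\gamma^n)=n\phi(\gamma)$ for all $\gamma\in\Gamma$, $n\in\mathbb Z$. For a map $\mu:\Gamma\to U(1)$, $D(\mu)=\inf\{\sup_\gamma|\mu(\gamma)-\nu(\gamma)|:\nu\in\mathrm{Hom}(\Gamma,U(1))\}$. *)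

From Stdlib Require Import Reals ZArith.
Open Scope R_scope.

Definition is_group {G : Type} (mul : G -> G -> G) (inv : G -> G) (e : G) : Prop :=
  (forall a b c, mul (mul a b) c = mul a (mul b c)) /\
  (forall a, mul e a = a) /\ (forall a, mul a e = a) /\
  (forall a, mul (inv a) a = e) /\ (forall a, mul a (inv a) = e).

Fixpoint npow {G : Type} (mul : G -> G -> G) (e : G) (n : nat) (g : G) : G :=
  match n with O => e | S k => mul g (npow mul e k g) end.

Definition zpow {G : Type} (mul : G -> G -> G) (inv : G -> G) (e : G) (n : Z) (g : G) : G :=
  match n with
  | Z0 => e
  | Zpos p => npow mul e (Pos.to_nat p) g
  | Zneg p => inv (npow mul e (Pos.to_nat p) g)
  end.

Definition dphi {G : Type} (mul : G -> G -> G) (phi : G -> R) (g h : G) : R :=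
  phi (mul g h) - phi g - phi h.

Definition is_quasimorphism {G : Type} (mul : G -> G -> G) (phi : G -> R) : Prop :=
  exists C, forall g h, Rabs (dphi mul phi g h) <= C.

Definition is_homogeneous {G : Type} (mul : G -> G -> G) (inv : G -> G) (e : G)
  (phi : G -> R) : Prop :=
  forall g (n : Z), phi (zpow mul inv e n g) = IZR n * phi g.

Definition is_hom_R {G : Type} (mul : G -> G -> G) (phi : G -> R) : Prop :=
  forall g h, phi (mul g h) = phi g + phi h.

Definition Cx := (R * R)%type.
Definition Cmul (z w : Cx) : Cx :=
  (fst z * fst w - snd z * snd w, fst z * snd w + snd z * fst w).
Definition Cdist (z w : Cx) : R :=
  sqrt ((fst z - fst w)^2 + (snd z - snd w)^2).
Definition in_U1 (z : Cx) : Prop := (fst z)^2 + (snd z)^2 = 1.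
Definition expi (t : R) : Cx := (cos t, sin t).

Definition is_hom_U1 {G : Type} (mul : G -> G -> G) (nu : G -> Cx) : Prop :=
  (forall g, in_U1 (nu g)) /\ (forall g h, nu (mul g h) = Cmul (nu g) (nu h)).

Definition is_glb (E : R -> Prop) (m : R) : Prop :=
  (forall x, E x -> m <= x) /\ (forall b, (forall x, E x -> b <= x) -> b <= m).

Definition sup_dist {G : Type} (mu nu : G -> Cx) (s : R) : Prop :=
  is_lub (fun x => exists g, x = Cdist (mu g) (nu g)) s.

Definition is_D {G : Type} (mul : G -> G -> G) (mu : G -> Cx) (D : R) : Prop :=
  is_glb (fun s => exists nu, is_hom_U1 mul nu /\ sup_dist mu nu s) D.

Definition is_defect_norm {G : Type} (mul : G -> G -> G) (phi : G -> R) (c : R) : Prop :=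
  is_lub (fun x => exists g h, x = Rabs (dphi mul phi g h)) c.

(* Homogeneity gives mu(g^2) = mu(g)^2, so for a
   homomorphism nu the quantity r(g) = Re(mu(g) conj(nu(g))) = cos(angle) obeys
   the doubling law r(g^2) = 2 r(g)^2 - 1, while |mu g - nu g| < sqrt 3 means
   r(g) > -1/2.  Under doubling, 1 - r at least triples while r stays above
   -1/2, which forces r = 1, i.e. mu = nu.  Hence either every nu is at
   distance >= sqrt 3 from mu, so D >= sqrt 3 and the arcsin term is >= 1, or
   mu is itself a homomorphism; then d phi is integer valued and, phi not being
   a homomorphism, some |d phi| >= 1. *)

From Stdlib Require Import Reals ZArith Lra Lia Psatz Classical.
Open Scope R_scope.

Lemma asin_ge_of_sin_le x y :
  -1 < x -> -(PI / 2) <= y <= PI / 2 -> sin y <= x -> y <= asin x.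
Proof.
  intros Hx Hy Hsin.
  destruct (Rle_or_lt 1 x) as [H1|H1].
  - unfold asin. destruct (Rle_dec x (-1)); [lra|].
    destruct (Rle_dec 1 x); lra.
  - destruct (Rle_or_lt y (asin x)) as [|Hlt]; auto.
    pose proof (asin_bound x).
    assert (Hlt_sin : sin (asin x) < sin y) by (apply sin_increasing_1; lra).
    rewrite sin_asin in Hlt_sin by lra. lra.
Qed.

Lemma cos_doubling_orbit_eq_1 {T : Type} (sq : T -> T) (r : T -> R) :
  (forall t, -1/2 < r t <= 1) ->
  (forall t, r (sq t) = 2 * r t ^ 2 - 1) ->
  forall t, r t = 1.
Proof.
  intros Hr Hsq.
  assert (Hhalf : forall t, 1/2 < r t).
  { intros t. pose proof (Hr (sq t)) as Hs. rewrite Hsq in Hs.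
    pose proof (Hr t). nra. }
  (* 1 - (2 r^2 - 1) = 2 (1 - r)(1 + r) and 1 + r > 3/2 *)
  assert (Hstep : forall t, 3 * (1 - r t) <= 1 - r (sq t)).
  { intros t. rewrite Hsq. pose proof (Hhalf t). pose proof (Hr t). nra. }
  assert (Hiter : forall k t, 3 ^ k * (1 - r t) <= 1).
  { induction k as [|k IHk]; intros t.
    - simpl. pose proof (Hhalf t). lra.
    - pose proof (IHk (sq t)). pose proof (Hstep t).
      pose proof (pow_lt 3 k ltac:(lra)).
      rewrite <- tech_pow_Rmult. nra. }
  intros t. destruct (Rle_or_lt 1 (r t)) as [|Hlt]; [pose proof (Hr t); lra|].
  destruct (Pow_x_infinity 3 ltac:(rewrite Rabs_pos_eq; lra) (2 / (1 - r t)))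
    as [N HN].
  specialize (HN N (le_n N)). rewrite Rabs_pos_eq in HN by (apply pow_le; lra).
  pose proof (Hiter N t).
  assert (2 / (1 - r t) * (1 - r t) = 2) by (field; lra).
  assert (2 / (1 - r t) * (1 - r t) <= 3 ^ N * (1 - r t))
    by (apply Rmult_le_compat_r; lra).
  lra.
Qed.

Definition Cdot (z w : Cx) : R := fst z * fst w + snd z * snd w.

Section UnitCircle.

Variables z w : Cx.
Hypotheses (Hz : in_U1 z) (Hw : in_U1 w).

Lemma Cdist_U1_sq : (fst z - fst w) ^ 2 + (snd z - snd w) ^ 2 = 2 - 2 * Cdot z w.
Proof. unfold in_U1, Cdot in *. nra. Qed.

Lemma Cdot_U1_le_1 : Cdot z w <= 1.
Proof.
  pose proof Cdist_U1_sq.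
  pose proof (pow2_ge_0 (fst z - fst w)). pose proof (pow2_ge_0 (snd z - snd w)).
  lra.
Qed.

Lemma Cdot_U1_eq_1 : Cdot z w = 1 -> z = w.
Proof.
  intros H1. pose proof Cdist_U1_sq as Hsq. rewrite H1 in Hsq.
  destruct z as [a b], w as [p q]. simpl in Hsq.
  pose proof (pow2_ge_0 (a - p)). pose proof (pow2_ge_0 (b - q)).
  assert (Ha : Rsqr (a - p) = 0) by (rewrite Rsqr_pow2; lra).
  assert (Hb : Rsqr (b - q) = 0) by (rewrite Rsqr_pow2; lra).
  apply Rsqr_0_uniq in Ha, Hb. f_equal; lra.
Qed.

Lemma Cdist_U1_lt_sqrt3 : Cdist z w < sqrt 3 -> -1/2 < Cdot z w.
Proof.
  unfold Cdist. rewrite Cdist_U1_sq. intros H. apply sqrt_lt_0_alt in H. lra.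
Qed.

(* Re((z conj w)^2) = (Re u)^2 - (Im u)^2 with |u| = 1 for u = z conj w. *)
Lemma Cdot_Cmul_diag : Cdot (Cmul z z) (Cmul w w) = 2 * Cdot z w ^ 2 - 1.
Proof.
  destruct z as [a b], w as [p q]. unfold in_U1, Cdot, Cmul in *. cbn [fst snd] in *.
  assert (Hu : (a * p + b * q) ^ 2 + (b * p - a * q) ^ 2 = 1).
  { replace 1 with ((a ^ 2 + b ^ 2) * (p ^ 2 + q ^ 2)) by (rewrite Hz, Hw; ring).
    ring. }
  nra.
Qed.

End UnitCircle.

Lemma expi_U1 t : in_U1 (expi t).
Proof.
  unfold in_U1, expi. cbn [fst snd].
  pose proof (sin2_cos2 t) as Hsc. unfold Rsqr in Hsc. lra.
Qed.

Lemma expi_add s t : Cmul (expi s) (expi t) = expi (s + t).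
Proof.
  unfold Cmul, expi. simpl. rewrite cos_plus, sin_plus. f_equal; ring.
Qed.

Lemma expi_2PI_eq_int s t :
  expi (2 * PI * s) = expi (2 * PI * t) -> exists k : Z, s - t = IZR k.
Proof.
  unfold expi. intros Heq. injection Heq as Hc Hs.
  pose proof PI_RGT_0.
  assert (Hcos : cos (2 * (PI * (s - t))) = 1).
  { replace (2 * (PI * (s - t))) with (2 * PI * s - 2 * PI * t) by ring.
    rewrite cos_minus, Hc, Hs.
    pose proof (sin2_cos2 (2 * PI * t)). unfold Rsqr in *. lra. }
  rewrite cos_2a_sin in Hcos.
  destruct (sin_eq_0_0 (PI * (s - t)) ltac:(nra)) as [k Hk].
  exists k. apply Rmult_eq_reg_l with PI; [rewrite Hk; ring | lra].
Qed.

Lemma U1_squaring_close_eq {T : Type} (sq : T -> T) (mu nu : T -> Cx) :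
  (forall t, in_U1 (mu t)) -> (forall t, in_U1 (nu t)) ->
  (forall t, mu (sq t) = Cmul (mu t) (mu t)) ->
  (forall t, nu (sq t) = Cmul (nu t) (nu t)) ->
  (forall t, Cdist (mu t) (nu t) < sqrt 3) ->
  forall t, mu t = nu t.
Proof.
  intros Hmu Hnu Hmu2 Hnu2 Hclose t.
  apply Cdot_U1_eq_1; auto.
  apply (cos_doubling_orbit_eq_1 sq (fun t => Cdot (mu t) (nu t))).
  - intros s. split.
    + apply Cdist_U1_lt_sqrt3; auto.
    + apply Cdot_U1_le_1; auto.
  - intros s. rewrite Hmu2, Hnu2. apply Cdot_Cmul_diag; auto.
Qed.

Lemma glb_lt_witness {E : R -> Prop} {m b : R} :
  is_glb E m -> m < b -> exists x, E x /\ x < b.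
Proof.
  intros [_ Hglb] Hmb. apply NNPP. intros Hno.
  enough (b <= m) by lra.
  apply Hglb. intros x Ex. apply Rnot_lt_le. intros Hxb. apply Hno. eauto.
Qed.

Section Quasimorphism.

Context {G : Type} {mul : G -> G -> G} {phi : G -> R}.

Lemma homogeneous_square {inv : G -> G} {e : G} :
  (forall a, mul a e = a) -> is_homogeneous mul inv e phi ->
  forall g, phi (mul g g) = 2 * phi g.
Proof.
  intros He Hhom g. pose proof (Hhom g 2%Z) as H2. simpl in H2.
  rewrite He in H2. exact H2.
Qed.

Lemma is_D_nonneg (x : G) {mu : G -> Cx} {D : R} : is_D mul mu D -> 0 <= D.
Proof.
  intros [_ Hglb]. apply Hglb. intros s [nu [_ [Hub _]]].
  apply Rle_trans with (Cdist (mu x) (nu x)); [apply sqrt_pos | apply Hub; eauto].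
Qed.

Lemma dphi_int_of_expi_hom :
  (forall g h, expi (2 * PI * phi (mul g h))
               = Cmul (expi (2 * PI * phi g)) (expi (2 * PI * phi h))) ->
  forall g h, exists k : Z, dphi mul phi g h = IZR k.
Proof.
  intros Hm g h. unfold dphi.
  replace (phi (mul g h) - phi g - phi h) with (phi (mul g h) - (phi g + phi h))
    by ring.
  apply expi_2PI_eq_int. rewrite Hm, expi_add. f_equal. ring.
Qed.

Lemma non_hom_dphi_ge_1 :
  (forall g h, exists k : Z, dphi mul phi g h = IZR k) -> ~ is_hom_R mul phi ->
  exists g h, 1 <= Rabs (dphi mul phi g h).
Proof.
  intros Hint Hnh.
  destruct (not_all_ex_not _ _ Hnh) as [g Hg].
  destruct (not_all_ex_not _ _ Hg) as [h Hgh].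
  exists g, h. destruct (Hint g h) as [k Hk]. rewrite Hk, Rabs_Zabs.
  apply IZR_le. enough (k <> 0%Z) by lia.
  intros ->. apply Hgh. unfold dphi in Hk. lra.
Qed.

End Quasimorphism.

Theorem lemma2p3 (G : Type) (mul : G -> G -> G) (inv : G -> G) (e : G)
  (phi : G -> R) (D c : R) :
  is_group mul inv e ->
  is_quasimorphism mul phi ->
  is_homogeneous mul inv e phi ->
  ~ is_hom_R mul phi ->
  is_D mul (fun g => expi (2 * PI * phi g)) D ->
  is_defect_norm mul phi c ->
  3 / PI * asin (D / 2) + c >= 1.
Proof.
  intros (_ & _ & He & _ & _) _ Hhom Hnh HD Hc.
  pose proof PI_RGT_0.
  assert (Hcb : forall g h, Rabs (dphi mul phi g h) <= c)
    by (intros g h; apply (proj1 Hc); eauto).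
  pose proof (Hcb e e) as Hc0. pose proof (Rabs_pos (dphi mul phi e e)).
  pose proof (is_D_nonneg e HD) as HD0.
  assert (Hasin : forall y, 0 <= y <= PI / 2 -> sin y <= D / 2 ->
                              3 / PI * y <= 3 / PI * asin (D / 2))
    by (intros y Hy Hsin; apply Rmult_le_compat_l;
        [apply Rlt_le, Rdiv_lt_0_compat; lra | apply asin_ge_of_sin_le; lra]).
  pose proof (Hasin 0 ltac:(lra) ltac:(rewrite sin_0; lra)) as Hasin0.
  destruct (Rle_or_lt (sqrt 3) D) as [Hfar|Hnear].
  - pose proof (Hasin (PI / 3) ltac:(lra) ltac:(rewrite sin_PI3; lra)).
    replace (3 / PI * (PI / 3)) with 1 in * by (field; lra). lra.
  - destruct (glb_lt_witness HD Hnear) as [s [[nu [[HU Hnu] Hsup]] Hs]].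
    assert (Hmu_nu : forall g, expi (2 * PI * phi g) = nu g).
    { apply (U1_squaring_close_eq (fun g => mul g g)); auto using expi_U1.
      - intros g. rewrite (homogeneous_square He Hhom), expi_add. f_equal. ring.
      - intros g. apply Rle_lt_trans with s; [apply (proj1 Hsup); eauto | exact Hs]. }
    assert (Hint : forall g h, exists k : Z, dphi mul phi g h = IZR k)
      by (apply dphi_int_of_expi_hom; intros g h; rewrite !Hmu_nu; apply Hnu).
    destruct (non_hom_dphi_ge_1 Hint Hnh) as [g [h Hge1]].
    pose proof (Hcb g h). lra.
Qed.
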